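(* Let $\alpha$ be a sentence, $\psi$ and $\beta$ formulas, and $\Gamma$ a set of formulas. If $\Gamma,\beta\vdash\psi$, then $\Gamma,\alpha\vee\beta\vdash\alpha\vee\psi$.
   Context: Fix a countable predicate language $\mathcal L$ consisting of variables, constant symbols and predicate symbols (so terms are just variables and constants), with connectives $\to$, $\&$, the propositional constant $0$ and quantifiers $\forall,\exists$. Abbreviations: $\phi\wedge\psi$ is $\phi\&(\phi\to\psi)$; $\phi\vee\psi$ is $((\phi\to\psi)\to\psi)\wedge((\psi\to\phi)\to\phi)$; $\neg\phi$ is $\phi\to 0$; $1$ is $0\to 0$; $\beta^n$ is $\beta\&\cdots\&\beta$ ($n$ factors). $\phi(x/t)$ denotes the result of substituting the term $t$ for the free occurrences of $x$ in $\phi$. A sentence is a formula with no free variables; a theory is any set of formulas. Hájek's basic predicate logic BL$\forall$ has the axiom schemata (A1) $(\phi\to\psi)\to((\psi\to\chi)\to(\phi\to\chi))$; (A2) $(\phi\&\psi)\to\phi$; (A3) $(\phi\&\psi)\to(\psi\&\phi)$; (A4) $(\phi\&(\phi\to\psi))\to(\psi\&(\psi\to\phi))$; (A5) $(\phi\to(\psi\to\chi))\to((\phi\&\psi)\to\chi)$; (A6) $((\phi\&\psi)\to\chi)\to(\phi\to(\psi\to\chi))$; (A7) $((\phi\to\psi)\to\chi)\to(((\psi\to\phi)\to\chi)\to\chi)$; (A8) $0\to\phi$; ($\forall$1) $\forall x\phi\to\phi(x/t)$ and ($\exists$1) $\phi(x/t)\to\exists x\phi$, for $t$ substitutable for $x$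 in $\phi$; ($\forall$2) $\forall x(\phi\to\psi)\to(\phi\to\forall x\psi)$, ($\exists$2) $\forall x(\psi\to\phi)\to(\exists x\psi\to\phi)$ and (Lin) $\forall x(\psi\vee\phi)\to((\forall x\psi)\vee\phi)$, each with $x$ not free in $\phi$; its rules are modus ponens (from $\phi$ and $\phi\to\psi$ infer $\psi$) and generalization (from $\phi$ infer $\forall x\phi$). The logic $\vdash$ extends BL$\forall$ by the axiom schema (RC) $\forall x(\chi\&\chi)\to((\forall x\chi)\&(\forall x\chi))$ for every formula $\chi$, and the infinitary rule (Inf): from all of $\phi\vee(\alpha\to\beta^n)$, $n\in\mathbb N$, infer $\phi\vee(\alpha\to(\alpha\&\beta))$, where $\phi,\alpha,\beta$ are sentences. A proof from $\Gamma$ is a sequence $(\phi_i)_{i\le\xi}$ indexed by the ordinals up to some ordinal $\xi$ such that each $\phi_i$ is an axiom of BL$\forall$, an instance of (RC), a member of $\Gamma$, or is obtained from formulas in $\{\phi_j: j<i\}$ by modus ponens, generalization, or (Inf). $\Gamma\vdash\phi$ means there is a proof from $\Gamma$ whose last member is $\phi$; $\Gamma,\psi\vdash\phi$ means $\Gamma\cup\{\psi\}\vdash\phi$. *)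

From Stdlib Require Import Arith Fin.

Set Implicit Arguments.

Record language := {
  Const : Type;
  Pred : Type;
  arity : Pred -> nat;
  const_countable : exists f : Const -> nat, forall a b, f a = f b -> a = b;
  pred_countable : exists f : Pred -> nat, forall a b, f a = f b -> a = b
}.

Section Syntax.
Variable L : language.

Inductive term : Type :=
| tvar : nat -> term
| tconst : Const L -> term.

Inductive formula : Type :=
| Atom : forall p : Pred L, (Fin.t (arity L p) -> term) -> formula
| Imp : formula -> formula -> formula
| SConj : formula -> formula -> formula
| Zero : formula
| All : nat -> formula -> formula
| Ex : nat -> formula -> formula.

Definition term_has_var (x : nat) (t : term) : Prop :=
  match t with tvar y => y = x | tconst _ => False end.

Fixpoint free (x : nat) (phi : formula) : Prop :=
  match phi with
  | Atom p ts => exists i, term_has_var x (ts i)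
  | Imp a b => free x a \/ free x b
  | SConj a b => free x a \/ free x b
  | Zero => False
  | All y a => y <> x /\ free x a
  | Ex y a => y <> x /\ free x a
  end.

Definition sentence (phi : formula) : Prop := forall x, ~ free x phi.

Definition subst_term (x : nat) (t s : term) : term :=
  match s with
  | tvar y => if Nat.eqb y x then t else s
  | tconst _ => s
  end.

Fixpoint subst (x : nat) (t : term) (phi : formula) : formula :=
  match phi with
  | Atom p ts => Atom p (fun i => subst_term x t (ts i))
  | Imp a b => Imp (subst x t a) (subst x t b)
  | SConj a b => SConj (subst x t a) (subst x t b)
  | Zero => Zero
  | All y a => if Nat.eqb y x then All y a else All y (subst x t a)
  | Ex y a => if Nat.eqb y x then Ex y a else Ex y (subst x t a)
  end.

Fixpoint substitutable (x : nat) (t : term) (phi : formula) : Prop :=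
  match phi with
  | Atom _ _ => True
  | Imp a b => substitutable x t a /\ substitutable x t b
  | SConj a b => substitutable x t a /\ substitutable x t b
  | Zero => True
  | All y a => y = x \/ (substitutable x t a /\ (free x a -> ~ term_has_var y t))
  | Ex y a => y = x \/ (substitutable x t a /\ (free x a -> ~ term_has_var y t))
  end.

Definition Wedge (a b : formula) : formula := SConj a (Imp a b).
Definition Vee (a b : formula) : formula :=
  Wedge (Imp (Imp a b) b) (Imp (Imp b a) a).
Definition Neg (a : formula) : formula := Imp a Zero.
Definition One : formula := Imp Zero Zero.

Fixpoint Pow (b : formula) (n : nat) : formula :=
  match n with
  | 0 => One
  | 1 => b
  | S m => SConj b (Pow b m)
  end.

Inductive BLaxiom : formula -> Prop :=
| A1 : forall p q r, BLaxiom (Imp (Imp p q) (Imp (Imp q r) (Imp p r)))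
| A2 : forall p q, BLaxiom (Imp (SConj p q) p)
| A3 : forall p q, BLaxiom (Imp (SConj p q) (SConj q p))
| A4 : forall p q, BLaxiom (Imp (SConj p (Imp p q)) (SConj q (Imp q p)))
| A5 : forall p q r, BLaxiom (Imp (Imp p (Imp q r)) (Imp (SConj p q) r))
| A6 : forall p q r, BLaxiom (Imp (Imp (SConj p q) r) (Imp p (Imp q r)))
| A7 : forall p q r,
    BLaxiom (Imp (Imp (Imp p q) r) (Imp (Imp (Imp q p) r) r))
| A8 : forall p, BLaxiom (Imp Zero p)
| Ax_all1 : forall x t p, substitutable x t p ->
    BLaxiom (Imp (All x p) (subst x t p))
| Ax_ex1 : forall x t p, substitutable x t p ->
    BLaxiom (Imp (subst x t p) (Ex x p))
| Ax_all2 : forall x p q, ~ free x p ->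
    BLaxiom (Imp (All x (Imp p q)) (Imp p (All x q)))
| Ax_ex2 : forall x p q, ~ free x p ->
    BLaxiom (Imp (All x (Imp q p)) (Imp (Ex x q) p))
| Ax_lin : forall x p q, ~ free x p ->
    BLaxiom (Imp (All x (Vee q p)) (Vee (All x q) p)).

(** This is equivalent to the existence of an ordinal-indexed
    proof. *)
Inductive deriv (Gamma : formula -> Prop) : formula -> Prop :=
| d_ax : forall p, BLaxiom p -> deriv Gamma p
| d_rc : forall x c,
    deriv Gamma (Imp (All x (SConj c c)) (SConj (All x c) (All x c)))
| d_hyp : forall p, Gamma p -> deriv Gamma p
| d_mp : forall p q, deriv Gamma p -> deriv Gamma (Imp p q) -> deriv Gamma q
| d_gen : forall x p, deriv Gamma p -> deriv Gamma (All x p)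
| d_inf : forall phi a b, sentence phi -> sentence a -> sentence b ->
    (forall n, deriv Gamma (Vee phi (Imp a (Pow b n)))) ->
    deriv Gamma (Vee phi (Imp a (SConj a b))).

Definition extend (Gamma : formula -> Prop) (psi : formula) : formula -> Prop :=
  fun f => Gamma f \/ f = psi.

End Syntax.


(* Lift a derivation of [psi] from [Gamma, beta] step by step to a derivation
   of [alpha \/ psi] from [Gamma, alpha \/ beta].  Modus ponens lifts because
   [alpha \/ -] is closed under modus ponens in BL; generalization lifts by
   (Lin), which is where [alpha] must not contain free variables; and (Inf)
   lifts because its side formula can absorb the extra disjunct [alpha] by
   associativity of [\/]. *)

Section PropositionalBL.
Variables (L : language) (G : formula L -> Prop).

Hint Constructors BLaxiom : core.
Hint Resolve d_ax : core.

Lemma imp_trans {p q r : formula L} :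
  deriv G (Imp p q) -> deriv G (Imp q r) -> deriv G (Imp p r).
Proof. intros Hpq Hqr. apply (d_mp Hqr), (d_mp Hpq); auto. Qed.

Lemma imp_weaken (p q : formula L) : deriv G (Imp p (Imp q p)).
Proof. apply (d_mp (p := Imp (SConj p q) p)); auto. Qed.

Lemma sconj_mp (p q : formula L) : deriv G (Imp (SConj p (Imp p q)) q).
Proof. apply (imp_trans (q := SConj q (Imp q p))); auto. Qed.

Lemma imp_mp (p q : formula L) : deriv G (Imp p (Imp (Imp p q) q)).
Proof. apply (d_mp (sconj_mp p q)); auto. Qed.

Lemma imp_refl (p : formula L) : deriv G (Imp p p).
Proof.
  apply (imp_trans (imp_weaken p (One L))).
  apply (d_mp (p := One L)); [apply d_ax, A8 | apply imp_mp].
Qed.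

Lemma imp_swap {p q r : formula L} :
  deriv G (Imp p (Imp q r)) -> deriv G (Imp q (Imp p r)).
Proof.
  intros H. apply (d_mp H).
  apply (imp_trans (q := Imp (SConj p q) r)); [auto |].
  apply (imp_trans (q := Imp (SConj q p) r)); [| auto].
  apply (d_mp (p := Imp (SConj q p) (SConj p q))); auto.
Qed.

Lemma imp_post {p q r : formula L} :
  deriv G (Imp q r) -> deriv G (Imp (Imp p q) (Imp p r)).
Proof. intros H. apply (d_mp H), imp_swap; auto. Qed.

Lemma imp_pre {p q r : formula L} :
  deriv G (Imp p q) -> deriv G (Imp (Imp q r) (Imp p r)).
Proof. intros H. apply (d_mp H); auto. Qed.

Lemma sconj_pair (p q : formula L) : deriv G (Imp p (Imp q (SConj p q))).
Proof. apply (d_mp (imp_refl (SConj p q))); auto. Qed.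

(* Prelinearity (A7): it suffices to derive the goal under [X -> Y] and under
   [Y -> X], and in either case [X /\ Y] is [X & (X -> Y)] up to (A4). *)
Lemma wedge_intro {c X Y : formula L} :
  deriv G (Imp c X) -> deriv G (Imp c Y) -> deriv G (Imp c (Wedge X Y)).
Proof.
  intros HX HY. unfold Wedge.
  assert (under_XY : deriv G (Imp (Imp X Y) (Imp c (SConj X (Imp X Y))))).
  { apply (imp_trans (imp_swap (sconj_pair X (Imp X Y)))), imp_pre, HX. }
  assert (under_YX : deriv G (Imp (Imp Y X) (Imp c (SConj X (Imp X Y))))).
  { apply (imp_trans (imp_swap (sconj_pair Y (Imp Y X)))).
    apply (imp_trans (q := Imp Y (SConj X (Imp X Y)))); [| apply imp_pre, HY].
    apply imp_post; auto. }
  apply (d_mp under_YX), (d_mp under_XY); auto.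
Qed.

Lemma vee_introl (p q : formula L) : deriv G (Imp p (Vee p q)).
Proof. apply wedge_intro; [apply imp_mp | apply imp_weaken]. Qed.

Lemma vee_intror (p q : formula L) : deriv G (Imp q (Vee p q)).
Proof. apply wedge_intro; [apply imp_weaken | apply imp_mp]. Qed.

Lemma vee_elim {p q r : formula L} :
  deriv G (Imp p r) -> deriv G (Imp q r) -> deriv G (Imp (Vee p q) r).
Proof.
  intros Hp Hq.
  assert (from_pq : deriv G (Imp (Imp p q) (Imp (Vee p q) r))).
  { apply imp_swap, (imp_trans (q := Imp (Imp p q) q)); [apply d_ax, A2 |].
    apply imp_post, Hq. }
  assert (from_qp : deriv G (Imp (Imp q p) (Imp (Vee p q) r))).
  { apply imp_swap, (imp_trans (q := Imp (Imp q p) p)); [apply sconj_mp |].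
    apply imp_post, Hp. }
  apply (d_mp from_qp), (d_mp from_pq); auto.
Qed.

Lemma vee_comm (p q : formula L) : deriv G (Imp (Vee p q) (Vee q p)).
Proof. apply vee_elim; [apply vee_intror | apply vee_introl]. Qed.

Lemma vee_assoc (p q r : formula L) :
  deriv G (Imp (Vee p (Vee q r)) (Vee (Vee p q) r)).
Proof.
  apply vee_elim.
  - apply (imp_trans (vee_introl p q)), vee_introl.
  - apply vee_elim; [| apply vee_intror].
    apply (imp_trans (vee_intror p q)), vee_introl.
Qed.

Lemma vee_assoc_rev (p q r : formula L) :
  deriv G (Imp (Vee (Vee p q) r) (Vee p (Vee q r))).
Proof.
  apply vee_elim.
  - apply vee_elim; [apply vee_introl |].
    apply (imp_trans (vee_introl q r)), vee_intror.
  - apply (imp_trans (vee_intror q r)), vee_intror.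
Qed.

Lemma vee_of_deriv {a p : formula L} : deriv G p -> deriv G (Vee a p).
Proof. intros H. apply (d_mp H), vee_intror. Qed.

Lemma vee_mp {a p q : formula L} :
  deriv G (Vee a p) -> deriv G (Vee a (Imp p q)) -> deriv G (Vee a q).
Proof.
  intros Hp Hpq. apply (d_mp Hpq), (d_mp Hp), vee_elim.
  - apply (imp_trans (vee_introl a q)), imp_weaken.
  - apply imp_swap, vee_elim.
    + apply (imp_trans (vee_introl a q)), imp_weaken.
    + apply imp_post, vee_intror.
Qed.

End PropositionalBL.

Lemma sentence_vee (L : language) (a b : formula L) :
  sentence a -> sentence b -> sentence (Vee a b).
Proof.
  intros Ha Hb x Hx. specialize (Ha x); specialize (Hb x); simpl in Hx; tauto.
Qed.

Lemma deriv_vee_lift (L : language) (Gamma Delta : formula L -> Prop)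
  (alpha psi : formula L) :
  sentence alpha ->
  (forall g, Gamma g -> deriv Delta (Vee alpha g)) ->
  deriv Gamma psi -> deriv Delta (Vee alpha psi).
Proof.
  intros Halpha Hhyp H. induction H as
    [p Hax | x c | p Hp | p q _ IHp _ IHpq | x p _ IHp | phi a b Hphi Ha Hb _ IHn].
  - apply vee_of_deriv, d_ax, Hax.
  - apply vee_of_deriv, d_rc.
  - apply Hhyp, Hp.
  - exact (vee_mp _ _ IHp IHpq).
  - apply (d_mp (p := Vee (All x p) alpha)); [| apply vee_comm].
    apply (d_mp (p := All x (Vee p alpha))); [| apply d_ax, Ax_lin, Halpha].
    apply d_gen, (d_mp IHp), vee_comm.
  - apply (d_mp (p := Vee (Vee alpha phi) (Imp a (SConj a b))));
      [| apply vee_assoc_rev].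
    apply d_inf; [apply sentence_vee; assumption | assumption | assumption |].
    intros n. apply (d_mp (IHn n)), vee_assoc.
Qed.

Theorem mainTheorem2 (L : language) (Gamma : formula L -> Prop)
  (alpha psi beta : formula L) :
  sentence alpha ->
  deriv (extend Gamma beta) psi ->
  deriv (extend Gamma (Vee alpha beta)) (Vee alpha psi).
Proof.
  intros Halpha. apply deriv_vee_lift; [exact Halpha |].
  intros g [Hg | ->].
  - apply vee_of_deriv, d_hyp. left; exact Hg.
  - apply d_hyp. right; reflexivity.
Qed.
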